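(* Let $L\cong\mathbf{2}^n$ be a Boolean lattice and let $R_L\cong\prod_{1}^{n}\mathbb{Z}_2$ be the Boolean ring associated with $L$ (multiplication corresponding to meet). Then $\mathrm{Incomp}(L)=AG(R_L)$.
   Context: For a bounded lattice $L$, the incomparability graph $\mathrm{Incomp}(L)$ has vertex set $L\setminus\{0,1\}$, with distinct $a,b$ adjacent iff $a$ and $b$ are incomparable. For a commutative ring $R$ with identity, $\mathrm{ann}(a)=\{x\in R: xa=0\}$, $Z(R)$ is the set of zero-divisors, and the annihilator graph $AG(R)$ has vertex set $Z(R)\setminus\{0\}$, with distinct $x,y$ adjacent iff $\mathrm{ann}(xy)\neq\mathrm{ann}(x)\cup\mathrm{ann}(y)$. The Boolean ring $R_L$ has underlying set $L$ with product $ab=a\wedge b$ (and sum the symmetric difference), so $\mathrm{ann}(a)$ is the principal ideal generated by the complement of $a$. *)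

From mathcomp Require Import all_boot.
Set Implicit Arguments. Unset Strict Implicit. Unset Printing Implicit Defensive.

(* The Boolean lattice 2^n is modelled as the power set lattice {set 'I_n}
   (order = inclusion, meet = :&:, join = :|:, 0 = set0, 1 = setT). *)
Notation BoolLat n := {set 'I_n}.

Section Defs.
Variable n : nat.
Local Notation L := (BoolLat n).

Definition comparable (a b : L) : bool := (a \subset b) || (b \subset a).
Definition incomp_vertices : {set L} := [set a : L | (a != set0) && (a != setT)].
Definition incomp_adj (a b : L) : bool := (a != b) && ~~ comparable a b.

Definition RL_zero : L := set0.
Definition RL_one : L := setT.
Definition RL_mul (a b : L) : L := a :&: b.
Definition RL_add (a b : L) : L := (a :\: b) :|: (b :\: a).

Definition ann (a : L) : {set L} := [set x : L | RL_mul x a == RL_zero].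
Definition zero_divisors : {set L} :=
  [set x : L | [exists y : L, (y != RL_zero) && (RL_mul x y == RL_zero)]].

Definition AG_vertices : {set L} := zero_divisors :\ RL_zero.
Definition AG_adj (x y : L) : bool :=
  (x != y) && (ann (RL_mul x y) != ann x :|: ann y).

End Defs.

From Pilot Require Import Defs.
From mathcomp Require Import all_boot.

(* In R_L the annihilator of a is the principal ideal below the complement of
   a.  Hence every proper element is a zero-divisor (witnessed by its
   complement), ann is antitone, and ann(x y) = ann x :|: ann y exactly when x
   and y are comparable: otherwise the complement of x :&: y lies in ann(x y)
   but in neither ann x nor ann y. *)

Section BooleanRing.
Variable n : nat.
Implicit Types a x y : BoolLat n.

Lemma in_ann a x : (x \in ann a) = (x \subset ~: a).
Proof. by rewrite inE /RL_mul /RL_zero setI_eq0 disjoints_subset. Qed.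

Lemma ann_subset x y : x \subset y -> ann y \subset ann x.
Proof.
move=> sxy; apply/subsetP => z; rewrite !in_ann => /subset_trans; apply.
by rewrite setCS.
Qed.

Lemma in_zero_divisors x : (x \in zero_divisors n) = (x != setT).
Proof.
rewrite inE /RL_mul /RL_zero; apply/existsP/idP => [[y /andP[y0 /eqP xy0]]|xT].
  by apply: contra y0 => /eqP xT; rewrite -xy0 xT setTI.
by exists (~: x); rewrite setICr eqxx andbT -setCT (inj_eq (@setC_inj _)).
Qed.

Lemma ann_mul_comparable x y :
  Defs.comparable x y -> ann (RL_mul x y) = ann x :|: ann y.
Proof.
rewrite /RL_mul => /orP[sxy|syx].
  by rewrite (setIidPl sxy); apply/esym/setUidPl/ann_subset.
by rewrite (setIidPr syx); apply/esym/setUidPr/ann_subset.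
Qed.

Lemma ann_mul_incomparable x y :
  ~~ Defs.comparable x y -> ann (RL_mul x y) != ann x :|: ann y.
Proof.
rewrite negb_or => /andP[nsxy nsyx]; apply/eqP => /setP /(_ (~: (x :&: y))).
rewrite in_setU !in_ann /RL_mul subxx setCI => /esym/orP[sU|sU].
  by move: nsxy; rewrite -setCS (subset_trans (subsetUr _ _) sU).
by move: nsyx; rewrite -setCS (subset_trans (subsetUl _ _) sU).
Qed.

Lemma ann_mul_neqE x y :
  (ann (RL_mul x y) != ann x :|: ann y) = ~~ Defs.comparable x y.
Proof.
have [cxy|ncxy] := boolP (Defs.comparable x y).
  by rewrite ann_mul_comparable ?eqxx.
by rewrite ann_mul_incomparable.
Qed.

End BooleanRing.

Theorem mainTheorem9 (n : nat) :
  incomp_vertices n = AG_vertices n /\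
  (forall a b : BoolLat n, a \in incomp_vertices n -> b \in incomp_vertices n ->
     incomp_adj a b = AG_adj a b).
Proof.
split=> [|a b _ _]; last by rewrite /incomp_adj /AG_adj ann_mul_neqE.
by apply/setP => x; rewrite in_setD1 in_zero_divisors inE.
Qed.
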